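(* Let $G=(G^0,G^1,r,s)$ be a topological graph in which $G^0$ and $G^1$ are compact Hausdorff spaces and $r,s:G^1\to G^0$ are surjective local homeomorphisms. Then for each $n\in\mathbb{N}$ the sets $\{v\in G^0:|G^1v|=n\}$ and $\{v\in G^0:|vG^1|=n\}$ are compact open.
   Context: For $v\in G^0$, $G^1v:=s^{-1}(v)$ and $vG^1:=r^{-1}(v)$; $|\cdot|$ denotes cardinality. *)

From HB Require Import structures.
From mathcomp Require Import all_boot all_order all_algebra.
From mathcomp Require Import all_classical all_reals all_analysis.
Set Implicit Arguments. Unset Strict Implicit. Unset Printing Implicit Defensive.
Local Open Scope classical_set_scope.

Definition local_homeo (X Y : topologicalType) (f : X -> Y) : Prop :=
  forall x : X, exists U : set X,
    [/\ open U, U x, open (f @` U), {in U &, injective f}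
      & {within U, continuous f} /\
        exists g : Y -> X, [/\ {within f @` U, continuous g},
                               (forall y, (f @` U) y -> U (g y)) &
                               (forall y, (f @` U) y -> f (g y) = y)]].

(* G^1 v = s^{-1}(v) ; v G^1 = r^{-1}(v) *)
Definition card_src_eq (E V : Type) (s : E -> V) (n : nat) : set V :=
  [set v | (s @^-1` [set v] #= `I_n)%card].

From HB Require Import structures.
From mathcomp Require Import all_boot all_order all_algebra.
From mathcomp Require Import all_classical all_reals all_analysis.
Set Implicit Arguments. Unset Strict Implicit. Unset Printing Implicit Defensive.
Local Open Scope classical_set_scope.
Local Open Scope card_scope.

(* Proof idea: for a local homeomorphism f from a compact Hausdorff space E to
   a Hausdorff space V, the fibre over v is compact and discrete.  For w near v,
   every chart around a point x of the fibre has w in its image, the local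
   inverses of distinct charts take distinct values at w, and the fibre over w
   lies in the union of these charts, because f maps the closed complement of
   that union to a compact set missing v.  So w |-> (x |-> local inverse at x
   applied to w) is a bijection between the fibres over v and over w: the fibre
   cardinality is locally constant, each of its level sets is clopen, hence
   compact in the compact space V.  Compactness of the fibre is what makes
   "near v" uniform in x. *)

Lemma near_forall_isolated (X : topologicalType) (K : set X) (I : Type)
    (F : set_system I) (P : X -> I -> Prop) :
  Filter F -> compact K ->
  (forall x, K x -> \forall y \near x, K y -> y = x) ->
  (forall x, K x -> \forall i \near F, P x i) ->
  \forall i \near F, forall x, K x -> P x i.
Proof.
move=> FF /compact_near_coveringP/near_covering_withinP cK isoK PK.
apply: (cK I F (fun i x => P x i) FF) => x Kx.
exists ([set y | K y -> y = x], [set i | P x i]).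
  by split; [exact: isoK | exact: PK].
by move=> [y i] /= [yx Pi] /yx ->.
Qed.

Lemma hausdorff_near_neq (T : Type) (E : topologicalType) (F : set_system T)
    (a b : T -> E) (x y : E) :
  Filter F -> hausdorff_space E -> a @ F --> x -> b @ F --> y -> x != y ->
  \forall t \near F, a t != b t.
Proof.
move=> FF; rewrite open_hausdorff => sep ax bx /sep [[A B] /=].
rewrite !in_setE => -[xA yB] [oA oB AB0].
have nA : F (a @^-1` A) by apply: ax; exact: open_nbhs_nbhs.
have nB : F (b @^-1` B) by apply: bx; exact: open_nbhs_nbhs.
apply: filterS (filterI nA nB) => t [At Bt]; apply/eqP => ab.
have : (A `&` B) (a t) by split => //; rewrite ab.
by rewrite AB0.
Qed.

Lemma card_src_eq_clopen (E : Type) (V : topologicalType) (f : E -> V) (n : nat) :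
  (forall v, \forall w \near v, f @^-1` [set w] #= f @^-1` [set v]) ->
  open (card_src_eq f n) /\ closed (card_src_eq f n).
Proof.
move=> near_card; split.
  rewrite openE => v nv; apply: filterS (near_card v) => w wv.
  exact: card_eq_trans wv nv.
rewrite -openC openE => v nv; apply: filterS (near_card v) => w wv nw.
by apply: nv; exact: card_eq_trans (card_esym wv) nw.
Qed.

Lemma local_homeo_charts (X Y : topologicalType) (f : X -> Y) :
  local_homeo f ->
  exists (U : X -> set X) (g : X -> Y -> X), forall x,
    [/\ open (U x), U x x, open (f @` U x), {in U x &, injective f}
      & forall y, (f @` U x) y ->
        [/\ g x @ y --> g x y, U x (g x y) & f (g x y) = y]].
Proof.
move=> lh; have /choice[Ug chart] : forall x, exists Wh : set X * (Y -> X),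
    [/\ open Wh.1, Wh.1 x, open (f @` Wh.1), {in Wh.1 &, injective f}
      & forall y, (f @` Wh.1) y ->
        [/\ Wh.2 @ y --> Wh.2 y, Wh.1 (Wh.2 y) & f (Wh.2 y) = y]].
  move=> x; have [W [oW Wx ofW injW [_ [h [ch hW fh]]]]] := lh x.
  exists (W, h); split => // y fWy; split; [|exact: hW|exact: fh].
  move: ch; rewrite continuous_open_subspace // => /(_ y); apply.
  by rewrite in_setE.
by exists (fun x => (Ug x).1), (fun x => (Ug x).2).
Qed.

Lemma local_homeo_continuous (X Y : topologicalType) (f : X -> Y) :
  local_homeo f -> continuous f.
Proof.
move=> lh x; have [W [oW Wx _ _ [cW _]]] := lh x.
by move: cW; rewrite continuous_open_subspace // => /(_ x); apply; rewrite in_setE.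
Qed.

Section FibreCardinality.
Context {V E : topologicalType} (f : E -> V) (U : E -> set E) (g : E -> V -> E).
Hypotheses (hausV : hausdorff_space V) (hausE : hausdorff_space E).
Hypotheses (cptE : compact [set: E]) (contf : continuous f).
Hypotheses (openU : forall x, open (U x)) (memU : forall x, U x x).
Hypotheses (open_fU : forall x, open (f @` U x)).
Hypotheses (injU : forall x, {in U x &, injective f}).
Hypotheses (cvg_g : forall x w, (f @` U x) w -> g x @ w --> g x w).
Hypotheses (gU : forall x w, (f @` U x) w -> U x (g x w)).
Hypotheses (gK : forall x w, (f @` U x) w -> f (g x w) = w).

Local Notation fibre v := (f @^-1` [set v]).

Lemma chart_inj x y z : U x y -> U x z -> f y = f z -> y = z.
Proof. by move=> xy xz; apply: (@injU x); rewrite in_setE. Qed.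

Lemma g_center x : g x (f x) = x.
Proof.
have fUx : (f @` U x) (f x) by exists x.
by apply: (chart_inj (gU fUx) (memU x)); rewrite gK.
Qed.

Lemma compact_fibre v : compact (fibre v).
Proof.
apply: (subclosed_compact _ cptE) => //; apply: (continuous_closedP f).1 => //.
exact: accessible_closed_set1 (hausdorff_accessible hausV) v.
Qed.

Lemma near_forall_fibre v (P : E -> V -> Prop) :
  (forall x, f x = v -> \forall w \near v, P x w) ->
  \forall w \near v, forall x, f x = v -> P x w.
Proof.
apply: near_forall_isolated => [|x fx]; first exact: compact_fibre.
apply: filterS (open_nbhs_nbhs (conj (openU x) (memU x))) => y Uy fy.
by apply: (chart_inj Uy (memU x)); rewrite fx fy.
Qed.

Lemma near_fibre_chart_images v :
  \forall w \near v, forall x, f x = v -> (f @` U x) w.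
Proof.
apply: near_forall_fibre => x <-.
by apply: open_nbhs_nbhs; split => //; exists x.
Qed.

Lemma near_fibre_sections_neq v :
  \forall w \near v,
    forall x, f x = v -> forall y, f y = v -> x != y -> g x w != g y w.
Proof.
apply: (near_forall_fibre
  (P := fun x w => forall y, f y = v -> x != y -> g x w != g y w)) => x fx.
apply: (near_forall_fibre (P := fun y w => x != y -> g x w != g y w)) => y fy.
have fUv z : f z = v -> (f @` U z) v by move=> <-; exists z.
have cvg_center z : f z = v -> g z @ v --> z.
  by move=> fz; have := cvg_g (fUv z fz); rewrite -fz g_center.
have [<-|xy] := eqVneq x y; first by apply: nearW => w; rewrite eqxx.
by apply: filterS (hausdorff_near_neq _ hausE (cvg_center x fx)
  (cvg_center y fy) xy).
Qed.

Lemma near_fibre_sub_charts v :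
  \forall w \near v, fibre w `<=` \bigcup_(x in fibre v) U x.
Proof.
set C := \bigcup_(x in fibre v) U x.
have cpt_fCc : compact (f @` ~` C).
  apply: continuous_compact; first exact: continuous_subspaceT.
  apply: (subclosed_compact _ cptE) => //.
  by rewrite closedC; apply: bigcup_open => x _; exact: openU.
have : open_nbhs v (~` (f @` ~` C)).
  split; first by rewrite openC; exact: compact_closed.
  by move=> [x Cx fx]; apply: Cx; exists x.
move=> /open_nbhs_nbhs; apply: filterS => w nw x fx.
by apply: contrapT => Cx; apply: nw; exists x.
Qed.

Lemma near_card_fibre v : \forall w \near v, fibre w #= fibre v.
Proof.
apply: filterS (filterI (near_fibre_chart_images v)
  (filterI (near_fibre_sections_neq v) (near_fibre_sub_charts v))).
move=> w [img [neq cov]]; apply: card_esym.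
have /Pbij[h _] : set_bij (fibre v) (fibre w) (fun x => g x w).
  split.
  - by move=> x /= fx; exact: gK (img x fx).
  - move=> x y; rewrite !in_setE /= => fx fy gxy.
    have [//|xy] := eqVneq x y.
    by move: (neq x fx y fy xy); rewrite gxy eqxx.
  - move=> e /= fe; have [x fx Ue] := cov e fe; exists x => //.
    by apply: (chart_inj (gU (img x fx)) Ue); rewrite gK ?fe //; exact: img.
exact: pcard_eq h.
Qed.

End FibreCardinality.

Lemma local_homeo_card_src_eq (V E : topologicalType) (f : E -> V) (n : nat) :
  hausdorff_space V -> hausdorff_space E ->
  compact [set: V] -> compact [set: E] -> local_homeo f ->
  compact (card_src_eq f n) /\ open (card_src_eq f n).
Proof.
move=> hausV hausE cptV cptE lh.
have [U [g chart]] := local_homeo_charts lh.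
have [open_n closed_n] : open (card_src_eq f n) /\ closed (card_src_eq f n).
  apply: card_src_eq_clopen; apply: (near_card_fibre (U := U) (g := g)) => //;
    [exact: local_homeo_continuous
    | by move=> x; have [? ? ? ? gx] := chart x => // w /gx[]..].
by split => //; exact: subclosed_compact closed_n cptV _.
Qed.

Theorem mainTheorem9 (V E : topologicalType) (r s : E -> V) :
  hausdorff_space V -> hausdorff_space E ->
  compact [set: V] -> compact [set: E] ->
  local_homeo r -> local_homeo s ->
  (forall v : V, exists e : E, r e = v) ->
  (forall v : V, exists e : E, s e = v) ->
  forall n : nat,
    (compact (card_src_eq s n) /\ open (card_src_eq s n)) /\
    (compact (card_src_eq r n) /\ open (card_src_eq r n)).
Proof.
move=> hausV hausE cptV cptE lr ls _ _ n.
by split; apply: local_homeo_card_src_eq.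
Qed.
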